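(* Let $F\in\mathbb{C}[x]$ be a polynomial of degree $n\ge 2$ with roots $z_1,\ldots,z_n$ (listed with multiplicity). Let $k$ be an integer with $0\le k\le n$, let $K\in\mathbb{R}$ with $K\ge 1$, and let $c_1,c_2$ be real numbers satisfying \[ c_2\cdot n\cdot \ln\!\Big(\frac{1+2K}{2K}\Big)\;\ge\; c_1\cdot n\;\ge\;\frac{\max(1,k)}{\ln\!\big(1+\frac{1}{8K}\big)}. \] Let $\Delta=\Delta(m,r)$ be a disk and suppose there is a real $\lambda$ with \[ \lambda\ge\max\big(4c_2\cdot \max(1,k)\cdot n^3,\;16K\cdot\max(1,k)^2\cdot n\big) \] such that $\Delta$ is $(1,\lambda)$-isolating for the roots $z_1,\ldots,z_k$ of $F$. Then $T_k(c_1n\cdot\Delta,K,F)$ holds, i.e. \[ \left|\frac{F^{(k)}(m)(c_1nr)^k}{k!}\right|>K\sum_{i\ne k}\left|\frac{F^{(i)}(m)(c_1nr)^i}{i!}\right|. \]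
   Context: $\Delta(m,r)$ denotes the open disk in $\mathbb{C}$ with center $m$ and radius $r>0$, and $\lambda\cdot\Delta(m,r):=\Delta(m,\lambda r)$ for $\lambda>0$. For $0<\rho_1\le 1\le\rho_2$ and a set $S$ of roots of $F$ (counted with multiplicity), a disk $\Delta$ is called $(\rho_1,\rho_2)$-isolating for $S$ if $\rho_1\cdot\Delta$ contains exactly the roots in $S$ (with multiplicity) and $\rho_2\cdot\Delta\setminus\rho_1\cdot\Delta$ contains no root of $F$. For a disk $\Delta(m,r)$, $K\ge 1$ and $0\le k\le n$, the predicate $T_k(\Delta(m,r),K,F)$ (also written $T_k(m,r,K,F)$) holds iff $\left|\frac{F^{(k)}(m) r^k}{k!}\right|>K\sum_{i\neq k}\left|\frac{F^{(i)}(m)r^i}{i!}\right|$, the sum ranging over $i\in\{0,\ldots,n\}\setminus\{k\}$. *)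

From Stdlib Require Import Reals List Permutation.
Open Scope R_scope.

Record Cplx := mkC { re : R ; im : R }.
Definition C0 : Cplx := mkC 0 0.
Definition C1 : Cplx := mkC 1 0.
Definition Cadd (x y : Cplx) : Cplx := mkC (re x + re y) (im x + im y).
Definition Copp (x : Cplx) : Cplx := mkC (- re x) (- im x).
Definition Csub (x y : Cplx) : Cplx := Cadd x (Copp y).
Definition Cmul (x y : Cplx) : Cplx :=
  mkC (re x * re y - im x * im y) (re x * im y + im x * re y).
Definition Cscale (a : R) (x : Cplx) : Cplx := mkC (a * re x) (a * im x).
Definition Cmod (x : Cplx) : R := sqrt (re x ^ 2 + im x ^ 2).

(** Polynomials over Cplx as little-endian coefficient lists *)
Definition poly := list Cplx.
Fixpoint padd (p q : poly) : poly :=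
  match p, q with
  | nil, _ => q
  | _, nil => p
  | a :: p', b :: q' => Cadd a b :: padd p' q'
  end.
Definition pscale (a : Cplx) (p : poly) : poly := map (Cmul a) p.
Fixpoint pmul (p q : poly) : poly :=
  match p with
  | nil => nil
  | a :: p' => padd (pscale a q) (C0 :: pmul p' q)
  end.
Fixpoint peval (p : poly) (x : Cplx) : Cplx :=
  match p with
  | nil => C0
  | a :: p' => Cadd a (Cmul x (peval p' x))
  end.
(* formal derivative: coefficient i of p' is (i+1) * p_(i+1) *)
Fixpoint pderiv_aux (i : nat) (p : poly) : poly :=
  match p with
  | nil => nil
  | a :: p' => Cscale (INR i) a :: pderiv_aux (S i) p'
  end.
Definition pderiv (p : poly) : poly :=
  match p with nil => nil | _ :: p' => pderiv_aux 1 p' end.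
Fixpoint pderivn (k : nat) (p : poly) : poly :=
  match k with O => p | S k' => pderiv (pderivn k' p) end.

Definition poly_of_roots (a : Cplx) (zs : list Cplx) : poly :=
  fold_right (fun z p => pmul (Copp z :: C1 :: nil) p) (a :: nil) zs.

Definition in_disk (m : Cplx) (r : R) (z : Cplx) : Prop := Cmod (Csub z m) < r.
Definition in_diskb (m : Cplx) (r : R) (z : Cplx) : bool :=
  if Rlt_dec (Cmod (Csub z m)) r then true else false.

Definition isolating (rho1 rho2 : R) (m : Cplx) (r : R) (S zs : list Cplx) : Prop :=
  Permutation (filter (in_diskb m (rho1 * r)) zs) S /\
  (forall z, In z zs -> in_disk m (rho2 * r) z -> in_disk m (rho1 * r) z).

Definition taylor_term (F : poly) (m : Cplx) (r : R) (i : nat) : R :=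
  Cmod (Cscale (r ^ i / INR (Factorial.fact i)) (peval (pderivn i F) m)).

Definition Tk (n k : nat) (m : Cplx) (r K : R) (F : poly) : Prop :=
  taylor_term F m r k >
  K * fold_right Rplus 0
        (map (fun i => if Nat.eqb i k then 0 else taylor_term F m r i)
             (seq 0 (S n))).

From Pilot Require Import Defs.
From Stdlib Require Import Reals List Permutation Lra Lia Psatz.
Open Scope R_scope.

(* Write rho = c1 n r. The Taylor coefficients F^(i)(m) rho^i / i! of F are the coefficients
   of F(m + rho x) = a * prod_j ((m - z_j) + rho x). For the k roots in Delta the factor is
   dominated by rho x, since |m - z_j| < rho / (c1 n); for the other roots it is dominated by
   m - z_j, since rho <= (c1 n / lambda) |m - z_j|. In the l1 norm on coefficients, multiplying
   by a linear factor whose dominant monomial beats the other one by a ratio t multiplies the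
   relative distance to a monomial, in the form 1 + delta, by at most 1 + t. Hence
   F(m + rho x) is within relative l1-distance g - 1 of a monomial c x^k, where
   g = (1 + c1 n / lambda)^(n-k) (1 + 1 / (c1 n))^k, and the hypotheses on c1, c2 and lambda
   force K (g - 1) < 1, which makes the k-th coefficient dominate K times all the others. *)

Lemma Cplx_ext (x y : Cplx) : re x = re y -> im x = im y -> x = y.
Proof. destruct x, y; simpl; intros -> ->; reflexivity. Qed.

Ltac ceq := apply Cplx_ext; simpl; try ring.

Lemma Cmod_ge0 (x : Cplx) : 0 <= Cmod x.
Proof. apply sqrt_pos. Qed.

Lemma Cmod_sqr (x : Cplx) : Cmod x * Cmod x = re x ^ 2 + im x ^ 2.
Proof. apply sqrt_sqrt; nra. Qed.

Lemma Cmod_C0 : Cmod C0 = 0.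
Proof. unfold Cmod; cbn [re im C0]. replace (0 ^ 2 + 0 ^ 2) with 0 by ring. apply sqrt_0. Qed.

Lemma Cmod_real (x : R) : 0 <= x -> Cmod (mkC x 0) = x.
Proof. intros Hx; unfold Cmod; simpl. apply sqrt_lem_1; nra. Qed.

Lemma Cmod_mul (x y : Cplx) : Cmod (Cmul x y) = Cmod x * Cmod y.
Proof.
  unfold Cmod; simpl. rewrite <- sqrt_mult_alt by nra. f_equal; ring.
Qed.

Lemma Cmod_Copp (x : Cplx) : Cmod (Copp x) = Cmod x.
Proof. unfold Cmod; simpl. f_equal; ring. Qed.

Lemma Cmod_Csub_sym (x y : Cplx) : Cmod (Csub x y) = Cmod (Csub y x).
Proof. rewrite <- Cmod_Copp. f_equal. unfold Csub, Cadd, Copp. ceq. Qed.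

Lemma Cmod_pos (x : Cplx) : x <> C0 -> 0 < Cmod x.
Proof.
  intros Hx. destruct (Cmod_ge0 x) as [| H0]; [assumption | exfalso].
  pose proof (Cmod_sqr x) as Hsq. rewrite <- H0 in Hsq.
  apply Hx. destruct x as [a b]; simpl in *. ceq; nra.
Qed.

Lemma Cmod_triangle (x y : Cplx) : Cmod (Cadd x y) <= Cmod x + Cmod y.
Proof.
  pose proof (Cmod_ge0 x); pose proof (Cmod_ge0 y).
  pose proof (Cmod_sqr x) as Hx2; pose proof (Cmod_sqr y) as Hy2.
  unfold Cmod at 1. rewrite <- (sqrt_square (Cmod x + Cmod y)) by lra.
  apply sqrt_le_1_alt. destruct x as [a b], y as [c d]; cbn [re im Cadd] in *.
  set (nx := Cmod (mkC a b)) in *; set (ny := Cmod (mkC c d)) in *.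
  (* Cauchy-Schwarz, via Lagrange's identity *)
  assert (Hcs : (a * c + b * d) ^ 2 <= (nx * ny) ^ 2).
  { replace ((nx * ny) ^ 2) with ((nx * nx) * (ny * ny)) by ring.
    rewrite Hx2, Hy2. pose proof (pow2_ge_0 (a * d - b * c)). nra. }
  assert (0 <= nx * ny) by (apply Rmult_le_pos; assumption).
  assert (a * c + b * d <= nx * ny) by nra.
  nra.
Qed.

Definition coef (p : Defs.poly) (j : nat) : Cplx := nth j p C0.

Lemma coef_nil (j : nat) : coef nil j = C0.
Proof. destruct j; reflexivity. Qed.

Lemma coef_padd (p q : Defs.poly) (j : nat) :
  coef (padd p q) j = Cadd (coef p j) (coef q j).
Proof.
  revert q j; induction p as [| a p IH]; intros q j.
  - rewrite coef_nil; ceq.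
  - destruct q as [| b q].
    + rewrite coef_nil; ceq.
    + destruct j; [reflexivity | exact (IH q j)].
Qed.

Lemma coef_pscale (a : Cplx) (p : Defs.poly) (j : nat) :
  coef (pscale a p) j = Cmul a (coef p j).
Proof.
  revert j; induction p as [| b p IH]; intros j.
  - rewrite !coef_nil; ceq.
  - destruct j; [reflexivity | apply IH].
Qed.

Lemma coef_pderiv_aux (i : nat) (p : Defs.poly) (j : nat) :
  coef (pderiv_aux i p) j = Cscale (INR (i + j)) (coef p j).
Proof.
  revert i j; induction p as [| a p IH]; intros i j.
  - rewrite !coef_nil; ceq.
  - destruct j; cbn [pderiv_aux].
    + rewrite Nat.add_0_r; reflexivity.
    + rewrite <- Nat.add_succ_comm. exact (IH (S i) j).
Qed.

Lemma coef_pderiv (p : Defs.poly) (j : nat) :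
  coef (pderiv p) j = Cscale (INR (S j)) (coef p (S j)).
Proof.
  destruct p as [| a p]; cbn [pderiv].
  - rewrite !coef_nil; ceq.
  - exact (coef_pderiv_aux 1 p j).
Qed.

Lemma coef_mul_linear (u0 u1 : Cplx) (p : Defs.poly) (j : nat) :
  coef (pmul (u0 :: u1 :: nil) p) j =
  Cadd (Cmul u0 (coef p j))
       (match j with O => C0 | S j' => Cmul u1 (coef p j') end).
Proof.
  change (pmul (u0 :: u1 :: nil) p)
    with (padd (pscale u0 p) (C0 :: padd (pscale u1 p) (C0 :: nil))).
  rewrite coef_padd, coef_pscale. destruct j as [| j]; [reflexivity |].
  change (coef (C0 :: padd (pscale u1 p) (C0 :: nil)) (S j))
    with (coef (padd (pscale u1 p) (C0 :: nil)) j).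
  rewrite coef_padd, coef_pscale.
  replace (coef (C0 :: nil) j) with C0 by (destruct j; [| rewrite <- (coef_nil j)]; reflexivity).
  f_equal; ceq.
Qed.

Lemma peval_zero (q : Defs.poly) (x : Cplx) : (forall j, coef q j = C0) -> peval q x = C0.
Proof.
  induction q as [| b q IH]; intros Hq; [reflexivity |]. cbn [peval].
  rewrite IH by (intros j; exact (Hq (S j))).
  change b with (coef (b :: q) 0). rewrite Hq; ceq.
Qed.

Lemma peval_ext (p q : Defs.poly) (x : Cplx) :
  (forall j, coef p j = coef q j) -> peval p x = peval q x.
Proof.
  revert q; induction p as [| a p IH]; intros [| b q] Hpq.
  - reflexivity.
  - symmetry; apply peval_zero; intros j; rewrite <- Hpq; apply coef_nil.
  - apply peval_zero; intros j; rewrite Hpq; apply coef_nil.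
  - cbn [peval]. rewrite (IH q) by (intros j; exact (Hpq (S j))).
    change a with (coef (a :: p) 0). now rewrite Hpq.
Qed.

Lemma peval_padd (p q : Defs.poly) (x : Cplx) :
  peval (padd p q) x = Cadd (peval p x) (peval q x).
Proof.
  revert q; induction p as [| a p IH]; intros [| b q]; cbn [padd peval];
    try rewrite IH; ceq.
Qed.

Lemma peval_pscale (a : Cplx) (p : Defs.poly) (x : Cplx) :
  peval (pscale a p) x = Cmul a (peval p x).
Proof.
  induction p as [| b p IH]; [ceq |].
  change (peval (Cmul a b :: pscale a p) x = Cmul a (peval (b :: p) x)).
  cbn [peval]. rewrite IH; ceq.
Qed.

Lemma peval_mul_linear (c : Cplx) (p : Defs.poly) (x : Cplx) :
  peval (pmul (c :: Defs.C1 :: nil) p) x = Cmul (Cadd c x) (peval p x).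
Proof.
  change (pmul (c :: Defs.C1 :: nil) p)
    with (padd (pscale c p) (C0 :: padd (pscale Defs.C1 p) (C0 :: nil))).
  rewrite peval_padd, peval_pscale. cbn [peval].
  rewrite peval_padd, peval_pscale. ceq.
Qed.

Lemma coef_pderivn_mul_linear (c : Cplx) (G : Defs.poly) (i j : nat) :
  coef (pderivn i (pmul (c :: Defs.C1 :: nil) G)) j =
  Cadd (Cscale (INR i) (coef (pderivn (pred i) G) j))
       (coef (pmul (c :: Defs.C1 :: nil) (pderivn i G)) j).
Proof.
  revert j; induction i as [| i IH]; intros j; [ceq |].
  cbn [pderivn pred]. rewrite coef_pderiv, IH, !coef_mul_linear, !coef_pderiv.
  destruct i as [| i]; destruct j as [| j]; cbn [pred pderivn];
    rewrite ?coef_pderiv; ceq; rewrite ?S_INR; simpl; ring.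
Qed.

Lemma peval_pderivn_mul_linear (c : Cplx) (G : Defs.poly) (i : nat) (x : Cplx) :
  peval (pderivn i (pmul (c :: Defs.C1 :: nil) G)) x =
  Cadd (Cscale (INR i) (peval (pderivn (pred i) G) x))
       (Cmul (Cadd c x) (peval (pderivn i G) x)).
Proof.
  rewrite (peval_ext _ (padd (pscale (mkC (INR i) 0) (pderivn (pred i) G))
                            (pmul (c :: Defs.C1 :: nil) (pderivn i G)))).
  - rewrite peval_padd, peval_pscale, peval_mul_linear. ceq.
  - intros j. rewrite coef_pderivn_mul_linear, coef_padd, coef_pscale. f_equal; ceq.
Qed.

Definition taylor_coef (F : Defs.poly) (m : Cplx) (rho : R) (i : nat) : Cplx :=
  Cscale (rho ^ i / INR (Factorial.fact i)) (peval (pderivn i F) m).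

Definition root_factor (m : Cplx) (rho : R) (z : Cplx) : Defs.poly :=
  Csub m z :: mkC rho 0 :: nil.

Definition mul_root_factors (m : Cplx) (rho : R) (zs : list Cplx) (p : Defs.poly) :
  Defs.poly := fold_right (fun z q => pmul (root_factor m rho z) q) p zs.

(* The coefficients of [F(m + rho x) = a * prod_j ((m - z_j) + rho x)]. *)
Definition taylor_poly (a m : Cplx) (rho : R) (zs : list Cplx) : Defs.poly :=
  mul_root_factors m rho zs (a :: nil).

Lemma taylor_coef_mul_root (z m : Cplx) (G : Defs.poly) (rho : R) (i : nat) :
  taylor_coef (pmul (Copp z :: Defs.C1 :: nil) G) m rho i =
  Cadd (Cmul (Csub m z) (taylor_coef G m rho i))
       (match i with O => C0 | S i' => Cmul (mkC rho 0) (taylor_coef G m rho i') end).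
Proof.
  unfold taylor_coef. rewrite peval_pderivn_mul_linear.
  destruct i as [| i]; cbn [pred].
  - ceq; field.
  - rewrite fact_simpl, mult_INR.
    pose proof (INR_fact_neq_0 i). pose proof (not_0_INR (S i) (Nat.neq_succ_0 i)).
    ceq; field; auto.
Qed.

Lemma taylor_coef_poly_of_roots (a m : Cplx) (rho : R) (zs : list Cplx) (i : nat) :
  taylor_coef (poly_of_roots a zs) m rho i = coef (taylor_poly a m rho zs) i.
Proof.
  revert i; induction zs as [| z zs IH]; intros i.
  - unfold taylor_coef; destruct i as [| i].
    + change (coef (taylor_poly a m rho nil) 0) with a; ceq; field.
    + replace (pderivn (S i) (poly_of_roots a nil)) with (@nil Cplx)
        by (induction i; cbn in *; [| rewrite <- IHi]; reflexivity).
      change (coef (taylor_poly a m rho nil) (S i)) with (coef nil i).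
      rewrite coef_nil; ceq.
  - change (poly_of_roots a (z :: zs))
      with (pmul (Copp z :: Defs.C1 :: nil) (poly_of_roots a zs)).
    change (taylor_poly a m rho (z :: zs))
      with (pmul (Csub m z :: mkC rho 0 :: nil) (taylor_poly a m rho zs)).
    rewrite taylor_coef_mul_root, coef_mul_linear.
    destruct i; rewrite !IH; reflexivity.
Qed.

Definition norm1 (p : Defs.poly) : R := fold_right (fun c s => Cmod c + s) 0 p.

Fixpoint monomial (c : Cplx) (i : nat) : Defs.poly :=
  match i with O => c :: nil | S i' => C0 :: monomial c i' end.

Definition psub (p q : Defs.poly) : Defs.poly := padd p (pscale (Copp Defs.C1) q).

Lemma coef_monomial (c : Cplx) (i j : nat) :
  coef (monomial c i) j = if Nat.eqb j i then c else C0.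
Proof.
  revert j; induction i as [| i IH]; intros [| j]; cbn [monomial Nat.eqb];
    try reflexivity.
  - exact (coef_nil j).
  - exact (IH j).
Qed.

Lemma coef_psub (p q : Defs.poly) (j : nat) :
  coef (psub p q) j = Csub (coef p j) (coef q j).
Proof. unfold psub. rewrite coef_padd, coef_pscale. ceq. Qed.

Lemma norm1_ge0 (p : Defs.poly) : 0 <= norm1 p.
Proof.
  induction p as [| a p IH]; cbn [norm1 fold_right]; [lra |].
  pose proof (Cmod_ge0 a); fold (norm1 p); lra.
Qed.

Lemma norm1_cons (a : Cplx) (p : Defs.poly) : norm1 (a :: p) = Cmod a + norm1 p.
Proof. reflexivity. Qed.

Lemma norm1_ext (p q : Defs.poly) :
  (forall j, coef p j = coef q j) -> norm1 p = norm1 q.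
Proof.
  assert (Hzero : forall r, (forall j, coef r j = C0) -> norm1 r = 0).
  { induction r as [| b r IH]; intros Hr; [reflexivity |].
    rewrite norm1_cons, IH by (intros j; exact (Hr (S j))).
    change b with (coef (b :: r) 0). rewrite Hr, Cmod_C0. ring. }
  revert q; induction p as [| a p IH]; intros [| b q] Hpq.
  - reflexivity.
  - symmetry; apply Hzero; intros j; rewrite <- Hpq; apply coef_nil.
  - apply Hzero; intros j; rewrite Hpq; apply coef_nil.
  - rewrite !norm1_cons, (IH q) by (intros j; exact (Hpq (S j))).
    change a with (coef (a :: p) 0). now rewrite Hpq.
Qed.

Lemma norm1_padd (p q : Defs.poly) : norm1 (padd p q) <= norm1 p + norm1 q.
Proof.
  revert q; induction p as [| a p IH]; intros [| b q]; cbn [padd].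
  1-3: rewrite ?norm1_cons; cbn [norm1 fold_right]; lra.
  rewrite !norm1_cons. pose proof (Cmod_triangle a b). specialize (IH q). lra.
Qed.

Lemma norm1_pscale (a : Cplx) (p : Defs.poly) : norm1 (pscale a p) = Cmod a * norm1 p.
Proof.
  induction p as [| b p IH]; [cbn; ring |].
  change (norm1 (pscale a (b :: p))) with (Cmod (Cmul a b) + norm1 (pscale a p)).
  rewrite norm1_cons, IH, Cmod_mul. ring.
Qed.

Lemma norm1_monomial (c : Cplx) (i : nat) : norm1 (monomial c i) = Cmod c.
Proof.
  induction i as [| i IH]; cbn [monomial]; rewrite norm1_cons; cbn [norm1 fold_right].
  - ring.
  - fold (norm1 (monomial c i)). rewrite IH, Cmod_C0. ring.
Qed.

Lemma norm1_le_monomial (p : Defs.poly) (c : Cplx) (i : nat) :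
  norm1 p <= Cmod c + norm1 (psub p (monomial c i)).
Proof.
  rewrite <- (norm1_monomial c i).
  rewrite (norm1_ext p (padd (monomial c i) (psub p (monomial c i)))).
  - apply norm1_padd.
  - intros j. rewrite coef_padd, coef_psub. ceq.
Qed.

Lemma norm1_mul_linear_low (u0 u1 c : Cplx) (p : Defs.poly) (i : nat) :
  norm1 (psub (pmul (u0 :: u1 :: nil) p) (monomial (Cmul u0 c) i)) <=
  Cmod u0 * norm1 (psub p (monomial c i)) + Cmod u1 * norm1 p.
Proof.
  rewrite (norm1_ext _ (padd (pscale u0 (psub p (monomial c i))) (C0 :: pscale u1 p))).
  - rewrite <- !norm1_pscale, <- (Rplus_0_l (norm1 (pscale u1 p))), <- Cmod_C0.
    apply norm1_padd.
  - intros j. rewrite coef_psub, coef_mul_linear, coef_padd, coef_pscale, coef_psub,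
      !coef_monomial.
    destruct j as [| j]; [| change (coef (C0 :: pscale u1 p) (S j)) with (coef (pscale u1 p) j);
      rewrite coef_pscale];
    destruct (Nat.eqb _ i); ceq.
Qed.

Lemma norm1_mul_linear_high (u0 u1 c : Cplx) (p : Defs.poly) (i : nat) :
  norm1 (psub (pmul (u0 :: u1 :: nil) p) (monomial (Cmul u1 c) (S i))) <=
  Cmod u0 * norm1 p + Cmod u1 * norm1 (psub p (monomial c i)).
Proof.
  rewrite (norm1_ext _ (padd (pscale u0 p) (C0 :: pscale u1 (psub p (monomial c i))))).
  - rewrite <- !norm1_pscale, <- (Rplus_0_l (norm1 (pscale u1 _))), <- Cmod_C0.
    apply norm1_padd.
  - intros j. rewrite coef_psub, coef_mul_linear, coef_padd, coef_pscale, !coef_monomial.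
    destruct j as [| j]; [ceq |].
    change (coef (C0 :: pscale u1 (psub p (monomial c i))) (S j))
      with (coef (pscale u1 (psub p (monomial c i))) j).
    rewrite coef_pscale, coef_psub, coef_monomial. cbn [Nat.eqb].
    destruct (Nat.eqb j i); ceq.
Qed.

Definition near_monomial (p : Defs.poly) (i : nat) (g : R) : Prop :=
  exists c, 0 < Cmod c /\ norm1 (psub p (monomial c i)) <= (g - 1) * Cmod c.

Lemma near_monomial_const (a : Cplx) : a <> C0 -> near_monomial (a :: nil) 0 1.
Proof.
  intros Ha. exists a; split; [now apply Cmod_pos |].
  rewrite (norm1_ext _ nil); [cbn; lra |].
  intros j. rewrite coef_psub, coef_monomial, coef_nil.
  destruct j as [| j]; cbn [Nat.eqb].
  - change (coef (a :: nil) 0) with a; ceq.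
  - change (coef (a :: nil) (S j)) with (coef nil j). rewrite coef_nil; ceq.
Qed.

Lemma near_monomial_mul_low (p : Defs.poly) (i : nat) (g t : R) (u0 u1 : Cplx) :
  0 < Cmod u0 -> Cmod u1 <= t * Cmod u0 -> near_monomial p i g ->
  near_monomial (pmul (u0 :: u1 :: nil) p) i (g * (1 + t)).
Proof.
  intros Hu0 Hu1 [c [Hc HD]]. exists (Cmul u0 c). rewrite Cmod_mul.
  split; [nra |].
  pose proof (norm1_mul_linear_low u0 u1 c p i).
  pose proof (norm1_le_monomial p c i). pose proof (norm1_ge0 p).
  pose proof (norm1_ge0 (psub p (monomial c i))). pose proof (Cmod_ge0 u1).
  assert (Cmod u1 * norm1 p <= t * Cmod u0 * (g * Cmod c)) by nra.
  nra.
Qed.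

Lemma near_monomial_mul_high (p : Defs.poly) (i : nat) (g t : R) (u0 u1 : Cplx) :
  0 < Cmod u1 -> Cmod u0 <= t * Cmod u1 -> near_monomial p i g ->
  near_monomial (pmul (u0 :: u1 :: nil) p) (S i) (g * (1 + t)).
Proof.
  intros Hu1 Hu0 [c [Hc HD]]. exists (Cmul u1 c). rewrite Cmod_mul.
  split; [nra |].
  pose proof (norm1_mul_linear_high u0 u1 c p i).
  pose proof (norm1_le_monomial p c i). pose proof (norm1_ge0 p).
  pose proof (norm1_ge0 (psub p (monomial c i))). pose proof (Cmod_ge0 u0).
  assert (Cmod u0 * norm1 p <= t * Cmod u1 * (g * Cmod c)) by nra.
  nra.
Qed.

Lemma mul_root_factors_app (m : Cplx) (rho : R) (A B : list Cplx) (p : Defs.poly) :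
  mul_root_factors m rho (A ++ B) p = mul_root_factors m rho A (mul_root_factors m rho B p).
Proof. apply fold_right_app. Qed.

Section RootFactors.

Variables (m : Cplx) (rho : R).
Hypothesis rho_pos : 0 < rho.

Lemma near_monomial_far_roots (R0 : R) (B : list Cplx) (p : Defs.poly) (i : nat) (g : R) :
  0 < R0 -> (forall z, In z B -> R0 <= Cmod (Csub m z)) -> near_monomial p i g ->
  near_monomial (mul_root_factors m rho B p) i (g * (1 + rho / R0) ^ length B).
Proof.
  intros HR0 HB Hp. induction B as [| z B IH]; cbn [mul_root_factors fold_right length pow].
  - now rewrite Rmult_1_r.
  - assert (Hz : R0 <= Cmod (Csub m z)) by (apply HB; now left).
    replace (g * ((1 + rho / R0) * (1 + rho / R0) ^ length B))
      with (g * (1 + rho / R0) ^ length B * (1 + rho / R0)) by ring.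
    apply near_monomial_mul_low; [lra | |].
    + rewrite Cmod_real by lra.
      replace rho with (rho / R0 * R0) at 1 by (field; lra).
      apply Rmult_le_compat_l; [| lra]. apply Rlt_le, Rdiv_lt_0_compat; lra.
    + apply IH; intros; apply HB; now right.
Qed.

Lemma near_monomial_near_roots (r0 : R) (A : list Cplx) (p : Defs.poly) (i : nat) (g : R) :
  (forall z, In z A -> Cmod (Csub m z) <= r0) -> near_monomial p i g ->
  near_monomial (mul_root_factors m rho A p) (length A + i) (g * (1 + r0 / rho) ^ length A).
Proof.
  intros HA Hp. induction A as [| z A IH]; cbn [mul_root_factors fold_right length pow Nat.add].
  - now rewrite Rmult_1_r.
  - assert (Hz : Cmod (Csub m z) <= r0) by (apply HA; now left).
    replace (g * ((1 + r0 / rho) * (1 + r0 / rho) ^ length A))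
      with (g * (1 + r0 / rho) ^ length A * (1 + r0 / rho)) by ring.
    apply near_monomial_mul_high.
    + rewrite Cmod_real; lra.
    + rewrite Cmod_real by lra. replace (r0 / rho * rho) with r0 by (field; lra). exact Hz.
    + apply IH; intros; apply HA; now right.
Qed.

Lemma taylor_poly_near_monomial (a : Cplx) (r0 R0 : R) (A B : list Cplx) :
  a <> C0 -> 0 < R0 ->
  (forall z, In z A -> Cmod (Csub m z) <= r0) ->
  (forall z, In z B -> R0 <= Cmod (Csub m z)) ->
  near_monomial (taylor_poly a m rho (A ++ B)) (length A)
    ((1 + rho / R0) ^ length B * (1 + r0 / rho) ^ length A).
Proof.
  intros Ha HR0 HA HB.
  pose proof (near_monomial_far_roots R0 B (a :: nil) 0 1 HR0 HB (near_monomial_const a Ha))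
    as Hfar.
  pose proof (near_monomial_near_roots r0 A _ 0 _ HA Hfar) as Hnear.
  unfold taylor_poly. rewrite mul_root_factors_app.
  now rewrite Nat.add_0_r, Rmult_1_l in Hnear.
Qed.

End RootFactors.

Lemma sum_coef_le_norm1 (p : Defs.poly) (N : nat) :
  fold_right Rplus 0 (map (fun j => Cmod (coef p j)) (seq 0 N)) <= norm1 p.
Proof.
  revert p; induction N as [| N IH]; intros p; [apply norm1_ge0 |].
  assert (Htl : forall j, coef p (S j) = coef (tl p) j)
    by (intros j; destruct p; [rewrite !coef_nil |]; reflexivity).
  assert (Hnorm : norm1 p = Cmod (coef p 0) + norm1 (tl p))
    by (destruct p; [cbn; rewrite Cmod_C0; ring |]; reflexivity).
  cbn [seq map fold_right]. rewrite <- seq_shift, map_map, Hnorm.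
  apply Rplus_le_compat_l.
  rewrite (map_ext _ (fun j => Cmod (coef (tl p) j))) by (intros; now rewrite Htl).
  apply IH.
Qed.

Lemma sum_seq_remove (f : nat -> R) (s N k : nat) : (s <= k < s + N)%nat ->
  fold_right Rplus 0 (map (fun j => if Nat.eqb j k then 0 else f j) (seq s N)) + f k =
  fold_right Rplus 0 (map f (seq s N)).
Proof.
  revert s; induction N as [| N IH]; intros s Hs; [lia |].
  cbn [seq map fold_right]. destruct (Nat.eqb_spec s k) as [<- | Hsk].
  - rewrite (map_ext_in _ f); [ring |].
    intros j Hj. apply in_seq in Hj. destruct (Nat.eqb_spec j s); [lia | reflexivity].
  - rewrite <- (IH (S s)) by lia. ring.
Qed.

Lemma near_monomial_dominant (p : Defs.poly) (n k : nat) (g K : R) :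
  (k <= n)%nat -> 1 <= K -> K * (g - 1) < 1 -> near_monomial p k g ->
  K * fold_right Rplus 0
        (map (fun i => if Nat.eqb i k then 0 else Cmod (coef p i)) (seq 0 (S n)))
  < Cmod (coef p k).
Proof.
  intros Hk HK Hg [c [Hc HD]].
  set (d := psub p (monomial c k)) in HD.
  assert (Hoff : forall i, i <> k -> Cmod (coef p i) = Cmod (coef d i)).
  { intros i Hi. unfold d. rewrite coef_psub, coef_monomial.
    apply Nat.eqb_neq in Hi. rewrite Hi. f_equal. ceq. }
  rewrite (map_ext _ (fun i => if Nat.eqb i k then 0 else Cmod (coef d i)))
    by (intros i; destruct (Nat.eqb_spec i k); auto).
  assert (Hsum := sum_seq_remove (fun j => Cmod (coef d j)) 0 (S n) k ltac:(lia)).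
  pose proof (sum_coef_le_norm1 d (S n)).
  assert (Hdk : coef d k = Csub (coef p k) c)
    by (unfold d; rewrite coef_psub, coef_monomial, Nat.eqb_refl; reflexivity).
  assert (Hck : Cmod c <= Cmod (coef p k) + Cmod (coef d k)).
  { rewrite Hdk, Cmod_Csub_sym.
    replace c with (Cadd (coef p k) (Csub c (coef p k))) at 1 by (unfold Csub; ceq).
    apply Cmod_triangle. }
  pose proof (Cmod_ge0 (coef d k)).
  set (off := fold_right Rplus 0 _) in Hsum |- *.
  (* K off <= K (|d| - |d_k|) <= K |d| - |d_k| < |c| - |d_k| <= |p_k| *)
  nra.
Qed.

Lemma isolating_firstn_skipn (lam r : R) (m : Cplx) (k : nat) (zs : list Cplx) :
  isolating 1 lam m r (firstn k zs) zs ->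
  (forall z, In z (firstn k zs) -> Cmod (Csub m z) <= r) /\
  (forall z, In z (skipn k zs) -> lam * r <= Cmod (Csub m z)).
Proof.
  intros [Hperm Hiso]. rewrite Rmult_1_l in Hperm, Hiso.
  assert (Hin : forall z, In z (firstn k zs) -> Cmod (Csub z m) < r).
  { intros z Hz. apply (Permutation_in z (Permutation_sym Hperm)), filter_In in Hz.
    destruct Hz as [_ Hz]. unfold in_diskb in Hz.
    destruct (Rlt_dec (Cmod (Csub z m)) r); [assumption | discriminate]. }
  (* all roots inside the disk are in the first [k]: the rest of the filter is empty *)
  assert (Hout : filter (in_diskb m r) (skipn k zs) = nil).
  { apply length_zero_iff_nil. pose proof (Permutation_length Hperm) as Hlen.
    rewrite <- (firstn_skipn k zs) in Hlen at 1. rewrite filter_app, length_app in Hlen.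
    rewrite forallb_filter_id in Hlen; [lia |].
    apply forallb_forall. intros z Hz. unfold in_diskb.
    destruct (Rlt_dec (Cmod (Csub z m)) r); [reflexivity | exfalso; auto]. }
  split.
  - intros z Hz. rewrite Cmod_Csub_sym. now apply Rlt_le, Hin.
  - intros z Hz. rewrite Cmod_Csub_sym. apply Rnot_lt_le. intros Hlt.
    assert (Hzr : in_disk m r z)
      by (apply Hiso; [rewrite <- (firstn_skipn k zs); apply in_or_app; now right | exact Hlt]).
    assert (Hf : In z (filter (in_diskb m r) (skipn k zs))).
    { apply filter_In. split; [exact Hz |]. unfold in_diskb, in_disk in *.
      destruct (Rlt_dec (Cmod (Csub z m)) r); [reflexivity | contradiction]. }
    now rewrite Hout in Hf.
Qed.

Lemma pow_le_exp (x : R) (k : nat) : 0 <= x -> (1 + x) ^ k <= exp (INR k * x).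
Proof.
  intros Hx. induction k as [| k IH].
  - rewrite Rmult_0_l, exp_0. simpl; lra.
  - cbn [pow]. rewrite S_INR. replace ((INR k + 1) * x) with (x + INR k * x) by ring.
    rewrite exp_plus.
    apply Rmult_le_compat; [lra | apply pow_le; lra | apply exp_ineq1_le | exact IH].
Qed.

Lemma pow_le_linear (x : R) (N : nat) :
  0 <= x -> INR N * x <= 1 / 2 -> (1 + x) ^ N <= 1 + 2 * INR N * x.
Proof.
  intros Hx. induction N as [| N IH]; intros HN; [simpl; lra |].
  rewrite S_INR in *. cbn [pow]. pose proof (pos_INR N).
  assert (HN' : INR N * x <= 1 / 2) by nra.
  apply Rle_trans with ((1 + x) * (1 + 2 * INR N * x)); [apply Rmult_le_compat_l; auto; lra | nra].
Qed.

Lemma ln_1_plus_lt (y : R) : 0 < y -> ln (1 + y) < y.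
Proof.
  intros Hy. rewrite <- (ln_exp y) at 2. apply ln_increasing; [lra | apply exp_ineq1; lra].
Qed.

Lemma exp_le_exp (x y : R) : x <= y -> exp x <= exp y.
Proof. intros [Hlt | ->]; [now apply Rlt_le, exp_increasing | apply Rle_refl]. Qed.

Lemma near_roots_growth (K X : R) (k : nat) :
  1 <= K -> 0 < X -> INR k <= X * ln (1 + 1 / (8 * K)) ->
  K * ((1 + 1 / X) ^ k - 1) <= 1 / 8.
Proof.
  intros HK HX Hk.
  assert (H8K : 0 < 1 / (8 * K)) by (apply Rdiv_lt_0_compat; lra).
  assert ((1 + 1 / X) ^ k <= 1 + 1 / (8 * K)).
  { rewrite <- (exp_ln (1 + 1 / (8 * K))) by lra.
    apply Rle_trans with (exp (INR k * (1 / X))).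
    - apply pow_le_exp. apply Rlt_le, Rdiv_lt_0_compat; lra.
    - apply exp_le_exp. unfold Rdiv. rewrite Rmult_1_l.
      apply Rmult_le_reg_r with X; [exact HX |].
      rewrite Rmult_assoc, Rinv_l, Rmult_1_r by lra. lra. }
  replace (1 / 8) with (K * (1 / (8 * K))) by (field; lra).
  apply Rmult_le_compat_l; lra.
Qed.

Lemma far_roots_growth (K X lam : R) (n N : nat) :
  1 <= K -> (2 <= n)%nat -> (N <= n)%nat -> 0 < X -> 8 * K * INR n ^ 2 * X <= lam ->
  K * ((1 + X / lam) ^ N - 1) <= 1 / 8.
Proof.
  intros HK Hn HN HX Hlam.
  assert (Hn2 : 2 <= INR n) by (apply (le_INR 2); lia).
  assert (HNn : INR N <= INR n) by (apply le_INR; lia).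
  pose proof (pos_INR N).
  assert (0 < 8 * K * INR n ^ 2 * X)
    by (repeat apply Rmult_lt_0_compat; try apply pow_lt; lra).
  assert (Hlam0 : 0 < lam) by lra.
  set (q := X / lam).
  assert (Hq0 : 0 <= q) by (apply Rlt_le, Rdiv_lt_0_compat; lra).
  assert (Hq : 8 * K * INR n ^ 2 * q <= 1).
  { unfold q. apply Rmult_le_reg_r with lam; [exact Hlam0 |].
    replace (8 * K * INR n ^ 2 * (X / lam) * lam) with (8 * K * INR n ^ 2 * X) by (field; lra).
    lra. }
  assert (HKnq : K * INR n * q <= 1 / 16) by nra.
  assert (HNq : INR N * q <= INR n * q) by (apply Rmult_le_compat_r; lra).
  pose proof (pow_le_linear q N Hq0 ltac:(nra)).
  nra.
Qed.

Lemma growth_product (K d e : R) :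
  1 <= K -> 1 <= d -> 1 <= e -> K * (d - 1) <= 1 / 8 -> K * (e - 1) <= 1 / 8 ->
  K * (d * e - 1) < 1.
Proof.
  intros HK Hd He Hkd Hke.
  replace (K * (d * e - 1)) with (K * (d - 1) + K * (e - 1) + K * (d - 1) * (e - 1)) by ring.
  assert (e - 1 <= 1 / 8) by nra.
  assert (K * (d - 1) * (e - 1) <= 1 / 8 * (1 / 8)) by (apply Rmult_le_compat; nra).
  lra.
Qed.

Lemma radius_scale_bounds (K c1 : R) (n k : nat) :
  1 <= K -> (1 <= n)%nat ->
  c1 * INR n >= INR (Nat.max 1 k) / ln (1 + 1 / (8 * K)) ->
  0 < c1 * INR n /\ INR k <= c1 * INR n * ln (1 + 1 / (8 * K)).
Proof.
  intros HK Hn Hc1.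
  assert (Hl : 0 < ln (1 + 1 / (8 * K))).
  { rewrite <- ln_1. apply ln_increasing; [lra |].
    assert (0 < 1 / (8 * K)) by (apply Rdiv_lt_0_compat; lra). lra. }
  assert (Hk : INR k <= INR (Nat.max 1 k)) by (apply le_INR; lia).
  assert (H1 : 1 <= INR (Nat.max 1 k)) by (apply (le_INR 1); lia).
  assert (Hmul : INR (Nat.max 1 k) <= c1 * INR n * ln (1 + 1 / (8 * K))).
  { apply Rge_le in Hc1. apply Rmult_le_compat_r with (r := ln (1 + 1 / (8 * K))) in Hc1;
      [| lra].
    unfold Rdiv in Hc1. rewrite Rmult_assoc, Rinv_l, Rmult_1_r in Hc1; lra. }
  split; [| lra].
  destruct (Rle_or_lt (c1 * INR n) 0) as [Hle |]; [| assumption].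
  assert (c1 * INR n * ln (1 + 1 / (8 * K)) <= 0) by nra. lra.
Qed.

Lemma lambda_lower_bound (K c2 X lam M L : R) (n : nat) :
  1 <= K -> (2 <= n)%nat -> 0 < X -> 1 <= M ->
  c2 * INR n * ln ((1 + 2 * K) / (2 * K)) >= X ->
  lam >= Rmax (4 * c2 * M * INR n ^ 3) L ->
  0 < 8 * K * INR n ^ 2 * X <= lam.
Proof.
  intros HK Hn HX HM Hc2 Hlam.
  pose proof (Rmax_l (4 * c2 * M * INR n ^ 3) L).
  assert (Hn2 : 2 <= INR n) by (apply (le_INR 2); lia).
  assert (Hn2pos : 0 < INR n ^ 2) by (apply pow_lt; lra).
  assert (H2K : 0 < 1 / (2 * K)) by (apply Rdiv_lt_0_compat; lra).
  replace ((1 + 2 * K) / (2 * K)) with (1 + 1 / (2 * K)) in Hc2 by (field; lra).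
  pose proof (ln_1_plus_lt _ H2K).
  assert (0 < ln (1 + 1 / (2 * K))) by (rewrite <- ln_1; apply ln_increasing; lra).
  assert (Hc2n : 0 < c2 * INR n) by nra.
  assert (H2KX : 2 * K * X <= c2 * INR n).
  { apply Rmult_le_reg_r with (1 / (2 * K)); [exact H2K |].
    replace (2 * K * X * (1 / (2 * K))) with X by (field; lra). nra. }
  split; [apply Rmult_lt_0_compat; [apply Rmult_lt_0_compat |]; lra |].
  apply Rle_trans with (4 * INR n ^ 2 * (c2 * INR n)).
  - replace (8 * K * INR n ^ 2 * X) with (4 * INR n ^ 2 * (2 * K * X)) by ring.
    apply Rmult_le_compat_l; lra.
  - assert (0 < 4 * INR n ^ 2 * (c2 * INR n)) by (apply Rmult_lt_0_compat; lra).
    replace (4 * c2 * M * INR n ^ 3) with (4 * INR n ^ 2 * (c2 * INR n) * M) in * by ring.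
    nra.
Qed.

Lemma Tk_of_near_monomial (n k : nat) (a m : Cplx) (zs : list Cplx) (rho K g : R) :
  (k <= n)%nat -> 1 <= K -> K * (g - 1) < 1 ->
  near_monomial (taylor_poly a m rho zs) k g ->
  Tk n k m rho K (poly_of_roots a zs).
Proof.
  intros Hk HK Hg Hnear.
  assert (Hterm : forall i, taylor_term (poly_of_roots a zs) m rho i =
                            Cmod (coef (taylor_poly a m rho zs) i))
    by (intros i; exact (f_equal Cmod (taylor_coef_poly_of_roots a m rho zs i))).
  unfold Tk. rewrite Hterm.
  rewrite (map_ext _ (fun i => if Nat.eqb i k then 0 else Cmod (coef (taylor_poly a m rho zs) i)))
    by (intros i; now rewrite Hterm).
  now apply Rlt_gt, near_monomial_dominant with g.
Qed.

Theorem theorem3p2 (n k : nat) (a : Cplx) (zs : list Cplx) (K c1 c2 lam : R)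
  (m : Cplx) (r : R) :
  (2 <= n)%nat ->
  a <> C0 ->
  length zs = n ->
  (k <= n)%nat ->
  1 <= K ->
  c2 * INR n * ln ((1 + 2 * K) / (2 * K)) >= c1 * INR n ->
  c1 * INR n >= INR (Nat.max 1 k) / ln (1 + 1 / (8 * K)) ->
  0 < r ->
  lam >= Rmax (4 * c2 * INR (Nat.max 1 k) * INR n ^ 3)
              (16 * K * INR (Nat.max 1 k) ^ 2 * INR n) ->
  isolating 1 lam m r (firstn k zs) zs ->
  Tk n k m (c1 * INR n * r) K (poly_of_roots a zs).
Proof.
  intros Hn Ha Hlen Hk HK Hc2 Hc1 Hr Hlam Hiso.
  destruct (isolating_firstn_skipn lam r m k zs Hiso) as [Hnear Hfar].
  destruct (radius_scale_bounds K c1 n k HK ltac:(lia) Hc1) as [HX HXk].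
  set (X := c1 * INR n) in *.
  assert (HM : 1 <= INR (Nat.max 1 k)) by (apply (le_INR 1); lia).
  destruct (lambda_lower_bound K c2 X lam _ _ n HK Hn HX HM Hc2 Hlam) as [Hpos HlamX].
  assert (Hlam0 : 0 < lam) by lra.
  pose proof (taylor_poly_near_monomial m (X * r) (Rmult_lt_0_compat _ _ HX Hr) a r (lam * r)
                (firstn k zs) (skipn k zs) Ha (Rmult_lt_0_compat _ _ Hlam0 Hr) Hnear Hfar)
    as Hdom.
  rewrite firstn_skipn, length_firstn, length_skipn, Hlen, Nat.min_l in Hdom by exact Hk.
  replace (X * r / (lam * r)) with (X / lam) in Hdom by (field; lra).
  replace (r / (X * r)) with (1 / X) in Hdom by (field; lra).
  refine (Tk_of_near_monomial n k a m zs (X * r) K _ Hk HK _ Hdom).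
  assert (0 < X / lam) by (apply Rdiv_lt_0_compat; lra).
  assert (0 < 1 / X) by (apply Rdiv_lt_0_compat; lra).
  apply growth_product; try apply pow_R1_Rle; try lra.
  - apply far_roots_growth with n; [exact HK | exact Hn | lia | exact HX | exact HlamX].
  - now apply near_roots_growth.
Qed.
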